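(* Let $Q$ be a finite acyclic quiver, $\mathbf d\in\mathbb{N}Q_0$, $0\neq\Theta\in(\mathbb{Z}Q_0)^*$ with $\Theta(\mathbf d)=0$, and $0\ne\mathbf n\in\mathbb{N}Q_0$. Let $\kappa$ be a positive functional and $C$ a positive integer with $\kappa(\mathbf d)<C\cdot\gcd(\Theta)$, and form $(\widehat Q,\widehat{\mathbf d},\widehat\Theta)$ as below. Then $\widehat{\mathbf d}$ is $\widehat\Theta$-coprime, and a representation $(V,f)$ of $\widehat Q$ of dimension vector $\widehat{\mathbf d}$ is $\widehat\Theta$-semistable if and only if $V$ is $\Theta$-semistable and $\Theta(\mathbf{dim}U)<0$ for every proper subrepresentation $U\subsetneq V$ containing the image of $f$, i.e. satisfying $\mathrm{Im}(f_i)\subseteq U_i\subseteq V_i$ for all $i\in Q_0$.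
   Context: Quiver representations, subrepresentations, dimension vectors, and $\Theta$-semistability for $\Theta(\mathbf{dim}V)=0$ (namely $\Theta(\mathbf{dim}U)\le 0$ for all subrepresentations $U$) are as usual. A positive functional is $\kappa\in(\mathbb{Z}Q_0)^*$ with $\kappa(\mathbf e)>0$ for all $0\ne\mathbf e\in\mathbb{N}Q_0$; $\gcd(\Theta)$ is the gcd of the coordinates $\Theta_i$. A dimension vector $\mathbf d$ is $\Theta$-coprime if $\Theta(\mathbf e)\ne0$ for all $0\ne\mathbf e\le\mathbf d$, $\mathbf e\neq\mathbf d$ (componentwise). Framing construction: $\widehat Q$ has vertices $Q_0\cup\{0\}$, the arrows of $Q$, and $n_i$ additional arrows $0\to i$ for each $i\in Q_0$; $\widehat d_i=d_i$ for $i\in Q_0$ and $\widehat d_0=1$; $\widehat\Theta_i=C\Theta_i-\kappa_i$ for $i\in Q_0$ and $\widehat\Theta_0=\kappa(\mathbf d)$. A representation of $\widehat Q$ of dimension vector $\widehat{\mathbf d}$ is identified with a pair $(V,f)$ where $V$ is a representation of $Q$ of dimension vector $\mathbf d$ and $f=(f_i:\mathbb{C}^{n_i}\to V_i)_{i\in Q_0}$. *)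

(* Quiver representations over C, modelled as R[i] for an
   arbitrary R : realType (every realType is a model of the real numbers). *)
From HB Require Import structures.
From mathcomp Require Import all_boot all_order all_algebra.
From mathcomp Require Import reals.
From mathcomp Require Import complex.

Set Implicit Arguments.
Unset Strict Implicit.
Unset Printing Implicit Defensive.

Import Order.TTheory GRing.Theory Num.Theory.
Local Open Scope ring_scope.

Record quiver := Quiver {
  vertex : finType;
  arrow : finType;
  src : arrow -> vertex;
  tgt : arrow -> vertex }.

Definition acyclic (Q : quiver) : Prop :=
  forall (a : arrow Q) (p : seq (arrow Q)),
    path (fun x y => tgt x == src y) a p -> tgt (last a p) != src a.

Definition dimvec (Q : quiver) := vertex Q -> nat.
Definition functional (Q : quiver) := vertex Q -> int.

Definition evalf (Q : quiver) (Th : functional Q) (e : dimvec Q) : int :=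
  \sum_(i : vertex Q) Th i * (e i)%:Z.

Definition gcdf (Q : quiver) (Th : functional Q) : nat :=
  \big[gcdn/0%N]_(i : vertex Q) `|Th i|%N.

Definition positive_functional (Q : quiver) (k : functional Q) : Prop :=
  forall e : dimvec Q, e <> (fun _ => 0%N) -> 0 < evalf k e.

Definition coprime_dimvec (Q : quiver) (Th : functional Q) (d : dimvec Q)
  : Prop :=
  forall e : dimvec Q, e <> (fun _ => 0%N) -> (forall i, (e i <= d i)%N) ->
    e <> d -> evalf Th e != 0.

(* A representation of Q of dimension vector d over K: V_i = K^{d_i}
   (row vectors), V_a : K^{d (src a)} -> K^{d (tgt a)} acting on the right. *)
Definition rep (K : fieldType) (Q : quiver) (d : dimvec Q) :=
  forall a : arrow Q, 'M[K]_(d (src a), d (tgt a)).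

(* A subrepresentation: subspaces U_i <= K^{d_i} (given as row spaces of
   square matrices) stable under all arrows. *)
Definition subrep (K : fieldType) (Q : quiver) (d : dimvec Q) (V : rep K d)
  (U : forall i : vertex Q, 'M[K]_(d i)) : Prop :=
  forall a : arrow Q, (U (src a) *m V a <= U (tgt a))%MS.

Definition dim_sub (K : fieldType) (Q : quiver) (d : dimvec Q)
  (U : forall i : vertex Q, 'M[K]_(d i)) : dimvec Q :=
  fun i => \rank (U i).

Definition semistable (K : fieldType) (Q : quiver) (Th : functional Q)
  (d : dimvec Q) (V : rep K d) : Prop :=
  forall U : forall i, 'M[K]_(d i), subrep V U -> evalf Th (dim_sub U) <= 0.

(* Framed quiver \hat Q: vertices Q_0 + {0} (0 is None), arrows of Q plus
   n_i arrows 0 -> i. *)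
Definition framed_quiver (Q : quiver) (n : dimvec Q) : quiver :=
  @Quiver (option (vertex Q)) (arrow Q + {i : vertex Q & 'I_(n i)})%type
    (fun a => match a with inl a' => Some (src a') | inr _ => None end)
    (fun a => match a with inl a' => Some (tgt a') | inr x => Some (tag x) end).

Definition framed_dim (Q : quiver) (n : dimvec Q) (d : dimvec Q)
  : dimvec (@framed_quiver Q n) :=
  fun i => match i with Some j => d j | None => 1%N end.

Arguments framed_dim {Q} n d _.

Definition framed_theta (Q : quiver) (n : dimvec Q) (d : dimvec Q)
  (Th kappa : functional Q) (C : nat) : functional (@framed_quiver Q n) :=
  fun i => match i with
           | Some j => (C%:Z * Th j - kappa j)%R
           | None => evalf kappa d
           end.

Arguments framed_theta {Q} n d Th kappa C _.

(* The representation (V, f) of \hat Q: f_i : K^{n_i} -> V_i is the matrix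
   whose k-th row is the image of the k-th basis vector, i.e. the map along
   the k-th arrow 0 -> i (a 1 x d_i matrix). *)
Definition framed_rep (K : fieldType) (Q : quiver) (n d : dimvec Q)
  (V : rep K d) (f : forall i : vertex Q, 'M[K]_(n i, d i))
  : rep K (@framed_dim Q n d) :=
  fun a => match a as a0 return
       'M[K]_(@framed_dim Q n d (@src (@framed_quiver Q n) a0),
              @framed_dim Q n d (@tgt (@framed_quiver Q n) a0)) with
     | inl a' => V a'
     | inr (existT i k) => row k (f i)
     end.

From HB Require Import structures.
From mathcomp Require Import all_boot all_order all_algebra.
From mathcomp Require Import reals.
From mathcomp Require Import complex.
From mathcomp Require Import zify.
From Stdlib Require Import FunctionalExtensionality.

(* For a subrepresentation U of (V, f) with restriction U' to Q and
   e_0 = dim U_0 in {0, 1}, hatTheta(U) = C Theta(U') - kappa(U') + kappa(d) e_0.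
   Theta(U') is a multiple of gcd(Theta) while 0 <= kappa(U') <= kappa(d) <
   C gcd(Theta), so hatTheta(U) has the sign of Theta(U') unless Theta(U') = 0.
   In that case hatTheta(U) is -kappa(U') if U_0 = 0 and kappa(d - dim U') if
   U_0 is the whole line, and positivity of kappa decides the sign.  Finally,
   U_0 <> 0 forces U' to contain the image of f. *)

Set Implicit Arguments.
Unset Strict Implicit.
Unset Printing Implicit Defensive.
Import Order.TTheory GRing.Theory Num.Theory.
Local Open Scope ring_scope.

Lemma big_option_sum (T : finType) (F : option T -> int) :
  \sum_(o : option T) F o = F None + \sum_(j : T) F (Some j).
Proof.
rewrite (bigD1 None) //=; congr (_ + _).
rewrite (reindex_omap Some id) /=; last by case.
by apply: eq_bigl => j /=; rewrite eqxx.
Qed.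

Lemma dimvec_neq_exists (Q : quiver) (e e' : dimvec Q) :
  e <> e' -> exists i, e i <> e' i.
Proof.
move=> neq_ee'; have [/existsP[i /eqP]|] := boolP [exists i, e i != e' i].
  by exists i.
rewrite negb_exists => /forallP eq_ee'; case: neq_ee'.
by apply: functional_extensionality => i; apply/eqP; rewrite -[_ == _]negbK.
Qed.

Lemma dim_sub_le (K : fieldType) (Q : quiver) (d : dimvec Q)
  (U : forall i : vertex Q, 'M[K]_(d i)) i : (dim_sub U i <= d i)%N.
Proof. exact: rank_leq_row. Qed.

Section Evalf.
Variables (Q : quiver) (k : functional Q).

Lemma evalfD (a b : dimvec Q) :
  evalf k (fun i => a i + b i)%N = evalf k a + evalf k b.
Proof. by rewrite /evalf -big_split; apply: eq_bigr => i _; rewrite PoszD mulrDr. Qed.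

Lemma evalf_subn (e d : dimvec Q) : (forall i, e i <= d i)%N ->
  evalf k (fun i => d i - e i)%N = evalf k d - evalf k e.
Proof.
move=> le_ed; apply/eqP; rewrite eq_sym subr_eq addrC -evalfD.
by apply/eqP; apply: eq_bigr => i _; rewrite subnKC.
Qed.

Lemma evalf_eq0 (e : dimvec Q) : (forall i, e i = 0%N) -> evalf k e = 0.
Proof. by move=> e0; rewrite /evalf big1 // => i _; rewrite e0 mulr0. Qed.

Lemma gcdf_dvdz_evalf (e : dimvec Q) : ((gcdf k)%:Z %| evalf k e)%Z.
Proof.
apply: rpred_sum => i _; apply: dvdz_mulr.
by rewrite dvdzE; apply: (biggcdn_inf i).
Qed.

Lemma gcdf_le_evalf (e : dimvec Q) :
  evalf k e != 0 -> (gcdf k <= `|evalf k e|)%N.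
Proof. by move=> nz; apply: dvdn_leq; [rewrite absz_gt0 | exact: gcdf_dvdz_evalf]. Qed.

Hypothesis k_pos : positive_functional k.

Lemma evalf_gt0 (e : dimvec Q) : (exists i, e i <> 0%N) -> 0 < evalf k e.
Proof. by case=> i ei0; apply: k_pos => e0; apply: ei0; rewrite e0. Qed.

Lemma evalf_ge0 (e : dimvec Q) : 0 <= evalf k e.
Proof.
have [/existsP[i /eqP ei0]|] := boolP [exists i, e i != 0%N].
  by apply/ltW/evalf_gt0; exists i.
rewrite negb_exists => /forallP e0; rewrite evalf_eq0 // => i.
by apply/eqP; rewrite -[_ == _]negbK.
Qed.

End Evalf.

Section Framing.
Variables (Q : quiver) (n d : dimvec Q) (Th kappa : functional Q) (C : nat).

Local Notation hatQ := (framed_quiver n).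
Local Notation hatd := (framed_dim n d).
Local Notation hatTh := (framed_theta n d Th kappa C).

Definition unframe (e : dimvec hatQ) : dimvec Q := fun j => e (Some j).

Lemma evalf_framed_theta (e : dimvec hatQ) :
  evalf hatTh e =
  C%:Z * evalf Th (unframe e) - evalf kappa (unframe e)
  + evalf kappa d * (e None)%:Z.
Proof.
rewrite /evalf big_option_sum /= addrC; congr (_ + _).
rewrite mulr_sumr -sumrN -big_split /=; apply: eq_bigr => j _.
by rewrite /framed_theta mulrBl mulrA.
Qed.

Hypotheses (kappa_pos : positive_functional kappa)
           (kappa_d_lt : evalf kappa d < (C * gcdf Th)%:Z).

Section Sign.
Variable e : dimvec hatQ.
Hypothesis e_le : forall o, (e o <= hatd o)%N.

Let unframe_le : forall j, (unframe e j <= d j)%N.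
Proof. by move=> j; apply: (e_le (Some j)). Qed.

Let kappa_bounds :
  [/\ 0 <= evalf kappa (unframe e), evalf kappa (unframe e) <= evalf kappa d
    & 0 <= evalf kappa d].
Proof.
have := evalf_ge0 kappa_pos (fun j => d j - unframe e j)%N.
rewrite evalf_subn // subr_ge0 => ->.
by rewrite !(evalf_ge0 kappa_pos).
Qed.

Lemma framed_theta_gt0 : 0 < evalf Th (unframe e) -> 0 < evalf hatTh e.
Proof.
move=> Th_gt0; have := gcdf_le_evalf (lt0r_neq0 Th_gt0).
have := e_le None; have [] := kappa_bounds.
rewrite evalf_framed_theta; move: kappa_d_lt Th_gt0 => /=; nia.
Qed.

Lemma framed_theta_lt0 : evalf Th (unframe e) < 0 -> evalf hatTh e < 0.
Proof.
move=> Th_lt0; have := gcdf_le_evalf (ltr0_neq0 Th_lt0).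
have := e_le None; have [] := kappa_bounds.
rewrite evalf_framed_theta; move: kappa_d_lt Th_lt0 => /=; nia.
Qed.

Lemma framed_theta_unframed_eq0 : evalf Th (unframe e) = 0 -> e None = 0%N ->
  evalf hatTh e = - evalf kappa (unframe e).
Proof. by move=> Th0 e0; rewrite evalf_framed_theta Th0 e0 mulr0 mulr0 sub0r addr0. Qed.

Lemma framed_theta_framed_eq0 : evalf Th (unframe e) = 0 -> e None = 1%N ->
  evalf hatTh e = evalf kappa (fun j => d j - unframe e j)%N.
Proof.
move=> Th0 e1; rewrite evalf_framed_theta Th0 e1 mulr0 sub0r mulr1 addrC.
by rewrite evalf_subn.
Qed.

End Sign.

Lemma framed_dim_coprime : coprime_dimvec hatTh hatd.
Proof.
move=> e /dimvec_neq_exists[o eo0] e_le /dimvec_neq_exists[o' eo'd].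
have [Th_lt0|Th_gt0|Th0] := ltgtP (evalf Th (unframe e)) 0.
- by rewrite ltr0_neq0 // framed_theta_lt0.
- by rewrite lt0r_neq0 // framed_theta_gt0.
have [eN0|eN1] : e None = 0%N \/ e None = 1%N by have := e_le None => /=; lia.
- rewrite framed_theta_unframed_eq0 // oppr_eq0 lt0r_neq0 //.
  by apply: (evalf_gt0 kappa_pos); case: o eo0 => [j|]; [exists j | rewrite eN0].
- rewrite framed_theta_framed_eq0 // lt0r_neq0 //; apply: (evalf_gt0 kappa_pos).
  case: o' eo'd => [j /= ejd|]; last by rewrite eN1.
  by exists j; have := e_le (Some j); rewrite /unframe /=; lia.
Qed.

End Framing.

Section FramedSubrep.
Variables (K : fieldType) (Q : quiver) (n d : dimvec Q) (V : rep K d)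
  (f : forall i : vertex Q, 'M[K]_(n i, d i)).

Local Notation hatQ := (framed_quiver n).
Local Notation hatd := (framed_dim n d).

Definition unframe_sub (U : forall o : vertex hatQ, 'M[K]_(hatd o))
  : forall j, 'M[K]_(d j) := fun j => U (Some j).

Definition framed_sub (U : forall j, 'M[K]_(d j)) (b : bool)
  : forall o : vertex hatQ, 'M[K]_(hatd o) :=
  fun o => match o return 'M[K]_(hatd o) with
           | Some j => U j | None => if b then 1%:M else 0 end.

Lemma dim_framed_sub U b : (dim_sub (framed_sub U b) None = b)%N.
Proof. by case: b; rewrite /dim_sub /= ?mxrank1 ?mxrank0. Qed.

Lemma subrep_framed_sub U (b : bool) :
  subrep V U -> (b -> forall i, (f i <= U i)%MS) ->
  subrep (framed_rep V f) (framed_sub U b).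
Proof.
move=> subU f_le [a|[i k]] /=; first exact: subU.
case: b f_le => f_le /=; last by rewrite mul0mx sub0mx.
by rewrite mul1mx (submx_trans (row_sub k (f i))) ?f_le.
Qed.

Lemma subrep_unframe_sub U :
  subrep (framed_rep V f) U -> subrep V (unframe_sub U).
Proof. by move=> subU a; apply: (subU (inl a)). Qed.

(* A nonzero [1 x 1] matrix at the framing vertex is invertible, so every
   arrow 0 -> i forces the corresponding row of [f i] into [U i]. *)
Lemma framing_le_unframe_sub U :
  subrep (framed_rep V f) U -> dim_sub U None = 1%N ->
  forall i, (f i <= unframe_sub U i)%MS.
Proof.
move=> subU rankU i; apply/row_subP => k.
have := subU (inr (existT _ i k)); rewrite /= (mx11_scalar (U None)).
rewrite mul_scalar_mx => /(scalemx_sub (U None 0 0)^-1).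
rewrite scalerA mulVf ?scale1r //; apply: contra_eqN rankU => /eqP U0.
by rewrite /dim_sub (mx11_scalar (U None)) U0 raddf0 mxrank0.
Qed.

End FramedSubrep.

Section FramedSemistable.
Variables (K : fieldType) (Q : quiver) (n d : dimvec Q) (Th kappa : functional Q)
  (C : nat) (V : rep K d) (f : forall i : vertex Q, 'M[K]_(n i, d i)).
Hypotheses (kappa_pos : positive_functional kappa)
           (kappa_d_lt : evalf kappa d < (C * gcdf Th)%:Z).

Local Notation hatTh := (framed_theta n d Th kappa C).

Lemma framed_semistable_semistable :
  semistable hatTh (framed_rep V f) -> semistable Th V.
Proof.
move=> ss U subU; rewrite leNgt; apply/negP => Th_gt0.
have := ss _ (subrep_framed_sub (b:=false) subU (fun b => False_ind _ (notF b))).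
by rewrite leNgt (framed_theta_gt0 kappa_pos kappa_d_lt (dim_sub_le _)).
Qed.

Lemma framed_semistable_proper_lt0 (U : forall i, 'M[K]_(d i)) :
  semistable hatTh (framed_rep V f) -> subrep V U ->
  (forall i, (f i <= U i)%MS) -> (exists i, \rank (U i) <> d i) ->
  evalf Th (dim_sub U) < 0.
Proof.
move=> ss subU f_le [i Ui_lt].
have := ss _ (subrep_framed_sub (b:=true) subU (fun _ => f_le)).
have hatU_le := dim_sub_le (framed_sub (n:=n) U true).
have [//|Th_gt0|Th0] := ltgtP (evalf Th (dim_sub U)) 0.
  by rewrite leNgt (framed_theta_gt0 kappa_pos kappa_d_lt hatU_le).
rewrite framed_theta_framed_eq0 ?dim_framed_sub // leNgt.
rewrite (evalf_gt0 kappa_pos) //; exists i.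
by have := dim_sub_le U i; rewrite /unframe /dim_sub /= in Ui_lt *; lia.
Qed.

Lemma semistable_framed : semistable Th V ->
  (forall U : forall i, 'M[K]_(d i), subrep V U ->
     (forall i, (f i <= U i)%MS) -> (exists i, \rank (U i) <> d i) ->
     evalf Th (dim_sub U) < 0) ->
  semistable hatTh (framed_rep V f).
Proof.
move=> ss proper_lt0 U subU; have U_le := dim_sub_le U.
have subU' := subrep_unframe_sub subU.
have [Th_lt0|Th_gt0|Th0] := ltgtP (evalf Th (dim_sub (unframe_sub U))) 0.
- exact/ltW/(framed_theta_lt0 kappa_pos kappa_d_lt U_le).
- by have := ss _ subU'; rewrite leNgt Th_gt0.
have [U0|U1] : dim_sub U None = 0%N \/ dim_sub U None = 1%N
  by have := U_le None => /=; lia.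
  by rewrite framed_theta_unframed_eq0 // oppr_le0 evalf_ge0.
have [/existsP[i /eqP Ui_lt]|] := boolP [exists i, \rank (U (Some i)) != d i].
  have := proper_lt0 _ subU' (framing_le_unframe_sub subU U1).
  by rewrite Th0 ltxx => /(_ (ex_intro _ i Ui_lt)).
rewrite negb_exists => /forallP U_full.
rewrite framed_theta_framed_eq0 // evalf_eq0 // => j.
by rewrite /unframe /dim_sub /= (eqP (negbNE (U_full j))) subnn.
Qed.

End FramedSemistable.

Theorem lemma2p4 (R : realType) (Q : quiver) (d : dimvec Q)
  (Th : functional Q) (n : dimvec Q) (kappa : functional Q) (C : nat) :
  acyclic Q ->
  Th <> (fun _ => 0) ->
  evalf Th d = 0 ->
  n <> (fun _ => 0%N) ->
  positive_functional kappa ->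
  (0 < C)%N ->
  evalf kappa d < (C * gcdf Th)%:Z ->
  coprime_dimvec (framed_theta n d Th kappa C) (framed_dim n d) /\
  forall (V : rep R[i] d) (f : forall i : vertex Q, 'M[R[i]]_(n i, d i)),
    semistable (framed_theta n d Th kappa C) (framed_rep V f) <->
    (semistable Th V /\
     forall U : forall i, 'M[R[i]]_(d i),
       subrep V U ->
       (forall i, (f i <= U i)%MS) ->
       (exists i, \rank (U i) <> d i) ->
       evalf Th (dim_sub U) < 0).
Proof.
(* Only the positivity of kappa and the bound kappa(d) < C gcd(Theta) are needed. *)
move=> _ _ _ _ kappa_pos _ kappa_d_lt.
split; first exact: framed_dim_coprime.
move=> V f; split.
- move=> ss; split.
    exact: (framed_semistable_semistable kappa_pos kappa_d_lt ss).
  by move=> U; apply: (framed_semistable_proper_lt0 kappa_pos kappa_d_lt).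
- by case; apply: (semistable_framed kappa_pos kappa_d_lt).
Qed.
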